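(* Let $\Delta\ge 1$ be an integer, $c>0$, $n\ge 0$, and let $s_1,\dots,s_\Delta$ be nonnegative numbers with $s_1 \le s_2 \le \dots \le s_\Delta$ and $\sum_{i=1}^{\Delta} s_i = n$. Then the quantity $\sum_{i=1}^{\Delta} (\Delta + i)\, c\sqrt{s_i}$, over all such tuples, is minimized when $s_\Delta = n$ (and hence $s_1=\dots=s_{\Delta-1}=0$). *)

From HB Require Import structures.
From mathcomp Require Import all_boot all_order all_algebra.
Set Implicit Arguments. Unset Strict Implicit. Unset Printing Implicit Defensive.
Import Order.TTheory GRing.Theory Num.Theory.
Local Open Scope ring_scope.

Definition objective (R : rcfType) (D : nat) (c : R) (s : nat -> R) : R :=
  \sum_(1 <= i < D.+1) ((D + i)%:R * c * Num.sqrt (s i)).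

Definition extremal (R : rcfType) (D : nat) (n : R) : nat -> R :=
  fun i => if i == D then n else 0.

From HB Require Import structures.
From mathcomp Require Import all_boot all_order all_algebra.
From mathcomp Require Import ring zify.
Set Implicit Arguments. Unset Strict Implicit. Unset Printing Implicit Defensive.
Import Order.TTheory GRing.Theory Num.Theory.
Local Open Scope ring_scope.

(* Write t_i = sqrt s_i, M = t_D and S = t_1 + ... + t_(D-1).  Every weight
   D + i is at least D, and the last one is 2D, so the objective is at least
   D c (S + 2M).  Monotonicity gives t_i <= M, hence
   n = t_1^2 + ... + t_D^2 <= M S + M^2, and then
   4n <= 4MS + 4M^2 <= (S + 2M)^2, i.e. 2 sqrt n <= S + 2M.  The extremal
   tuple has objective exactly 2D c sqrt n. *)

Section SqrtBounds.
Variable R : rcfType.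

Lemma sqrt_le_of_le_mul_add_sqr (x M S : R) :
  0 <= M -> 0 <= S -> 0 <= x -> x <= M * S + M ^+ 2 ->
  2 * Num.sqrt x <= S + 2 * M.
Proof.
move=> M_ge0 S_ge0 x_ge0 x_le.
have sum_ge0 : 0 <= S + 2 * M by rewrite addr_ge0 ?mulr_ge0.
rewrite -ler_sqr ?nnegrE ?mulr_ge0 ?sqrtr_ge0 // exprMn sqr_sqrtr //.
have -> : (S + 2 * M) ^+ 2 = 2 ^+ 2 * (M * S + M ^+ 2) + S ^+ 2 by ring.
by rewrite -[X in X <= _]addr0 lerD ?sqr_ge0 // ler_pM2l ?exprn_gt0.
Qed.

Lemma sum_sqr_le_bound_mul_sum (t : nat -> R) (a b : nat) (M : R) :
  (forall i, (a <= i < b)%N -> 0 <= t i <= M) ->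
  \sum_(a <= i < b) t i ^+ 2 <= M * \sum_(a <= i < b) t i.
Proof.
move=> t_bnd; rewrite mulr_sumr; apply: ler_sum_nat => i /t_bnd /andP[t_ge0 t_le].
by rewrite expr2 ler_wpM2r.
Qed.

End SqrtBounds.

Lemma nondecreasing_le_last (R : numDomainType) (D : nat) (s : nat -> R) :
  (forall i, (1 <= i < D)%N -> s i <= s i.+1) ->
  forall i, (1 <= i <= D)%N -> s i <= s D.
Proof.
move=> s_incr i iD.
have le_in := @homo_leq_in _ [pred k | 1 <= k <= D]%N s (fun x y => x <= y)
  (@lexx _ _) (fun y x z => @le_trans _ _ y x z).
apply: le_in; rewrite ?inE /=; try lia.
- by move=> j k jD kD m; rewrite !inE /= in jD kD *; lia.
- by move=> j jD SjD; rewrite !inE /= in jD SjD; apply: s_incr; lia.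
Qed.

Lemma objective_extremal (R : rcfType) (D : nat) (c n : R) : (1 <= D)%N ->
  objective D c (extremal D n) = D%:R * c * (2 * Num.sqrt n).
Proof.
move=> D_ge1; rewrite /objective big_nat_recr //= /extremal eqxx.
rewrite big_nat_cond big1 ?add0r => [|i /andP[/andP[_ ltiD] _]]; last first.
  by rewrite (ltn_eqF ltiD) sqrtr0 mulr0.
by rewrite natrD; ring.
Qed.

Lemma objective_lower_bound (R : rcfType) (D : nat) (c : R) (s : nat -> R) :
  (1 <= D)%N -> 0 <= c ->
  D%:R * c * (\sum_(1 <= i < D) Num.sqrt (s i) + 2 * Num.sqrt (s D))
    <= objective D c s.
Proof.
move=> D_ge1 c_ge0; rewrite /objective big_nat_recr //= mulrDr; apply: lerD.
  rewrite mulr_sumr; apply: ler_sum_nat => i _.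
  by rewrite ler_wpM2r ?sqrtr_ge0 // ler_wpM2r // ler_nat leq_addr.
by rewrite [leRHS](_ : _ = D%:R * c * (2 * Num.sqrt (s D))) // natrD; ring.
Qed.

Theorem mainTheorem2 (R : rcfType) (D : nat) (c n : R) (s : nat -> R)
  (hD : (1 <= D)%N) (hc : 0 < c) (hn : 0 <= n)
  (hs0 : forall i : nat, (1 <= i <= D)%N -> 0 <= s i)
  (hmono : forall i : nat, (1 <= i < D)%N -> s i <= s i.+1)
  (hsum : \sum_(1 <= i < D.+1) s i = n) :
  objective D c (extremal D n) <= objective D c s.
Proof.
set M := Num.sqrt (s D); set S := \sum_(1 <= i < D) Num.sqrt (s i).
have sD_ge0 : 0 <= s D by apply: hs0; rewrite hD leqnn.
have n_le : n <= M * S + M ^+ 2.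
  rewrite -hsum big_nat_recr //= sqr_sqrtr // lerD //.
  rewrite -(eq_big_nat _ _ (fun i iD => sqr_sqrtr (hs0 i _))); last by lia.
  apply: sum_sqr_le_bound_mul_sum => i iD.
  by rewrite sqrtr_ge0 ler_sqrt // (nondecreasing_le_last hmono); lia.
have key : 2 * Num.sqrt n <= S + 2 * M.
  apply: sqrt_le_of_le_mul_add_sqr => //; first exact: sqrtr_ge0.
  by apply: sumr_ge0 => i _; apply: sqrtr_ge0.
rewrite objective_extremal //; apply: le_trans (objective_lower_bound s hD (ltW hc)).
by apply: ler_wpM2l key; rewrite mulr_ge0 ?ler0n ?ltW.
Qed.
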